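(* The map $(f_n)^\bullet\mapsto f_\mathcal U$, where $f_\mathcal U(t):=\lim_{n,\mathcal U}f_n(t)$, is a well-defined surjective $*$-homomorphism $A^{c\mathcal U}\to C_b(X)$ with kernel exactly $I$. Consequently it induces a $*$-isomorphism $\Phi:A^{c\mathcal U}/I\to C_b(X)$ satisfying $\Phi(q(\Delta(a)))=a$ for all $a\in A$. In particular the Gelfand spectrum of $A^{c\mathcal U}/I$ is the Stone–Čech compactification $\beta X$.
   Context: $X$ is a second countable, locally compact space with basepoint $o$ and a fixed compatible proper metric $d$; $B(r)$ is the closed ball of radius $r$ about $o$. $A=C_0(X)$ and $C_b(X)$ is the $\mathrm{C}^*$-algebra of bounded continuous complex functions on $X$. $\mathcal U$ is a nonprincipal ultrafilter on $\mathbb N$, and $A^\mathcal U=\ell^\infty(A)/\{(f_n):\lim_{n,\mathcal U}\|f_n\|=0\}$ is the ultrapower, with $(f_n)^\bullet$ the class of $(f_n)$. A sequence $(f_n)\in\ell^\infty(A)$ is $\mathcal U$-equicontinuous on bounded sets if for every $r,\epsilon>0$ there is $\delta>0$ such that for a set of $n$ belonging to $\mathcal U$, $|f_n(s)-f_n(t)|\le\epsilon$ for all $s,t\in B(r)$ with $d(s,t)<\delta$; $A^{c\mathcal U}$ is the $\mathrm{C}^*$-subalgebra of $A^\mathcal U$ of classes of such sequences. $I:=\{(f_n)^\bullet\in A^\mathcal U:\exists r_n\in\mathbb R \text{ with } \lim_{n,\mathcal U}r_n=+\infty \text{ and } f_n|_{B(r_n)}\equiv 0\}$, a closed ideal contained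 in $A^{c\mathcal U}$. $q:A^{c\mathcal U}\to A^{c\mathcal U}/I$ is the quotient map and $\Delta(a)=(a,a,\dots)^\bullet$. *)

From Stdlib Require Import Reals ClassicalEpsilon.
Open Scope R_scope.

Definition Cx := (R * R)%type.
Definition C0 : Cx := (0, 0).
Definition Cadd (z w : Cx) : Cx := (fst z + fst w, snd z + snd w).
Definition Copp (z : Cx) : Cx := (- fst z, - snd z).
Definition Csub (z w : Cx) : Cx := Cadd z (Copp w).
Definition Cmul (z w : Cx) : Cx :=
  (fst z * fst w - snd z * snd w, fst z * snd w + snd z * fst w).
Definition Cconj (z : Cx) : Cx := (fst z, - snd z).
Definition Cnorm (z : Cx) : R := sqrt (fst z * fst z + snd z * snd z).

Definition is_metric {X : Type} (d : X -> X -> R) : Prop :=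
  (forall x y, d x y = 0 <-> x = y) /\
  (forall x y, d x y = d y x) /\
  (forall x y z, d x z <= d x y + d y z).

Definition converges {X : Type} (d : X -> X -> R) (x : nat -> X) (l : X) : Prop :=
  forall eps, 0 < eps -> exists N, forall n, (N <= n)%nat -> d (x n) l < eps.

Definition compact_set {X : Type} (d : X -> X -> R) (K : X -> Prop) : Prop :=
  forall x : nat -> X, (forall n, K (x n)) ->
  exists phi : nat -> nat, (forall n, (phi n < phi (S n))%nat) /\
  exists l, K l /\ converges d (fun n => x (phi n)) l.

Definition ball {X : Type} (d : X -> X -> R) (o : X) (r : R) : X -> Prop :=
  fun x => d o x <= r.

Definition is_proper_metric {X : Type} (d : X -> X -> R) : Prop :=
  is_metric d /\ forall (o : X) (r : R), compact_set d (ball d o r).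

Definition continuous_fun {X : Type} (d : X -> X -> R) (f : X -> Cx) : Prop :=
  forall x eps, 0 < eps -> exists delta, 0 < delta /\
    forall y, d x y < delta -> Cnorm (Csub (f y) (f x)) < eps.

Definition in_C0 {X : Type} (d : X -> X -> R) (f : X -> Cx) : Prop :=
  continuous_fun d f /\
  forall eps, 0 < eps -> exists K, compact_set d K /\
    forall x, ~ K x -> Cnorm (f x) < eps.

Definition in_Cb {X : Type} (d : X -> X -> R) (f : X -> Cx) : Prop :=
  continuous_fun d f /\ exists M, forall x, Cnorm (f x) <= M.

Definition is_nonprincipal_ultrafilter (U : (nat -> Prop) -> Prop) : Prop :=
  U (fun _ => True) /\
  ~ U (fun _ => False) /\
  (forall A B, U A -> U B -> U (fun n => A n /\ B n)) /\
  (forall A B : nat -> Prop, (forall n, A n -> B n) -> U A -> U B) /\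
  (forall A : nat -> Prop, U A \/ U (fun n => ~ A n)) /\
  (forall m : nat, ~ U (fun n => n = m)).

Definition is_ulim (U : (nat -> Prop) -> Prop) (z : nat -> Cx) (L : Cx) : Prop :=
  forall eps, 0 < eps -> U (fun n => Cnorm (Csub (z n) L) < eps).

Definition ulim_infty (U : (nat -> Prop) -> Prop) (r : nat -> R) : Prop :=
  forall M, U (fun n => M <= r n).

(* the chosen U-limit (meaningful when it exists) *)
Definition ulim (U : (nat -> Prop) -> Prop) (z : nat -> Cx) : Cx :=
  epsilon (inhabits C0) (fun L => is_ulim U z L).

Definition fU {X : Type} (U : (nat -> Prop) -> Prop) (f : nat -> X -> Cx) : X -> Cx :=
  fun t => ulim U (fun n => f n t).

Definition in_linfA {X : Type} (d : X -> X -> R) (f : nat -> X -> Cx) : Prop :=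
  (forall n, in_C0 d (f n)) /\ exists M, forall n x, Cnorm (f n x) <= M.

(* lim_{n,U} ||f_n - g_n|| = 0 : f and g define the same element of A^U *)
Definition ueq {X : Type} (U : (nat -> Prop) -> Prop) (f g : nat -> X -> Cx) : Prop :=
  forall eps, 0 < eps -> U (fun n => forall x, Cnorm (Csub (f n x) (g n x)) <= eps).

Definition U_equicont {X : Type} (d : X -> X -> R) (o : X)
  (U : (nat -> Prop) -> Prop) (f : nat -> X -> Cx) : Prop :=
  forall r eps, 0 < r -> 0 < eps -> exists delta, 0 < delta /\
    U (fun n => forall s t, ball d o r s -> ball d o r t -> d s t < delta ->
                  Cnorm (Csub (f n s) (f n t)) <= eps).

(* g is a representative of a class belonging to A^{cU} *)
Definition rep_AcU {X : Type} (d : X -> X -> R) (o : X)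
  (U : (nat -> Prop) -> Prop) (g : nat -> X -> Cx) : Prop :=
  in_linfA d g /\ exists f, in_linfA d f /\ U_equicont d o U f /\ ueq U f g.

(* the class of g belongs to the ideal I *)
Definition rep_I {X : Type} (d : X -> X -> R) (o : X)
  (U : (nat -> Prop) -> Prop) (g : nat -> X -> Cx) : Prop :=
  in_linfA d g /\ exists f, in_linfA d f /\ ueq U f g /\
    exists r : nat -> R, ulim_infty U r /\
      forall n x, ball d o (r n) x -> f n x = C0.

Definition sadd {X : Type} (f g : nat -> X -> Cx) := fun n x => Cadd (f n x) (g n x).
Definition smul {X : Type} (f g : nat -> X -> Cx) := fun n x => Cmul (f n x) (g n x).
Definition sscal {X : Type} (l : Cx) (f : nat -> X -> Cx) := fun n x => Cmul l (f n x).
Definition sstar {X : Type} (f : nat -> X -> Cx) := fun n x => Cconj (f n x).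

(* Pointwise U-limits of bounded sequences exist and are additive, multiplicative and
   compatible with conjugation; U-equicontinuity on balls makes the limit function
   continuous.  A bounded continuous h is the limit of its truncations
   h * clamp(n + 1 - d(o,.)) in C_0(X), which agree with h on B(r) once n >= r and so
   inherit the uniform continuity of h on the compact balls.  For the kernel: if g_U = 0,
   equicontinuity and a finite delta-net of B(k+1) give |g_n| <= 1/(k+1) on B(k+1) for
   U-many n; choosing k_n diagonally with k_n -> oo along U and cutting g_n off on B(k_n)
   yields a representative vanishing on growing balls, at a U-negligible cost. *)

From Stdlib Require Import Reals Lra Lia ClassicalEpsilon FunctionalExtensionality List.
From Coquelicot Require Complex.
Open Scope R_scope.

Lemma Cnorm_Cmod (z : Cx) : Cnorm z = Complex.Cmod z.
Proof. unfold Cnorm, Complex.Cmod. f_equal. simpl. ring. Qed.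

Lemma Cnorm_ge0 (z : Cx) : 0 <= Cnorm z.
Proof. rewrite Cnorm_Cmod. apply Complex.Cmod_ge_0. Qed.

Lemma Cnorm_triangle (z w : Cx) : Cnorm (Cadd z w) <= Cnorm z + Cnorm w.
Proof. rewrite !Cnorm_Cmod. apply (Complex.Cmod_triangle z w). Qed.

Lemma Cnorm_mul (z w : Cx) : Cnorm (Cmul z w) = Cnorm z * Cnorm w.
Proof. rewrite !Cnorm_Cmod. apply (Complex.Cmod_mult z w). Qed.

Lemma Cnorm_conj (z : Cx) : Cnorm (Cconj z) = Cnorm z.
Proof. rewrite !Cnorm_Cmod. apply (Complex.Cmod_conj z). Qed.

Lemma Cnorm_C0 : Cnorm C0 = 0.
Proof. rewrite Cnorm_Cmod. apply Complex.Cmod_0. Qed.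

Lemma Cnorm_eq0 (z : Cx) : Cnorm z = 0 -> z = C0.
Proof. rewrite Cnorm_Cmod. apply Complex.Cmod_eq_0. Qed.

Lemma Cnorm_fst (z : Cx) : Rabs (fst z) <= Cnorm z.
Proof. rewrite Cnorm_Cmod. apply (Complex.re_le_Cmod z). Qed.

Lemma Cnorm_snd (z : Cx) : Rabs (snd z) <= Cnorm z.
Proof.
  replace (Cnorm z) with (Cnorm (snd z, fst z)) by (unfold Cnorm; simpl; f_equal; ring).
  apply (Cnorm_fst (snd z, fst z)).
Qed.

Lemma Cnorm_le_Rabs_fst_snd (z : Cx) : Cnorm z <= Rabs (fst z) + Rabs (snd z).
Proof.
  pose proof (Rabs_pos (fst z)); pose proof (Rabs_pos (snd z)).
  unfold Cnorm. rewrite <- (sqrt_Rsqr (Rabs (fst z) + Rabs (snd z))) by lra.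
  apply sqrt_le_1_alt. pose proof (Rsqr_abs (fst z)); pose proof (Rsqr_abs (snd z)).
  unfold Rsqr in *. nra.
Qed.

Definition Cscale (c : R) (z : Cx) : Cx := (c * fst z, c * snd z).

Ltac Cx_ring :=
  intros; repeat match goal with z : Cx |- _ => destruct z end;
  unfold Csub, Cadd, Copp, Cmul, Cconj, C0, Cscale, Complex.Copp, Complex.Cmult;
  simpl; f_equal; ring.

Lemma Csub_diag (z : Cx) : Csub z z = C0.
Proof. Cx_ring. Qed.

Lemma Csub_C0 (z : Cx) : Csub z C0 = z.
Proof. Cx_ring. Qed.

Lemma Cnorm_sub_sym (z w : Cx) : Cnorm (Csub z w) = Cnorm (Csub w z).
Proof.
  rewrite !Cnorm_Cmod. replace (Csub w z) with (Complex.Copp (Csub z w)) by Cx_ring.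
  symmetry. apply Complex.Cmod_opp.
Qed.

Lemma Cnorm_sub_triangle (z w v : Cx) :
  Cnorm (Csub z v) <= Cnorm (Csub z w) + Cnorm (Csub w v).
Proof.
  replace (Csub z v) with (Cadd (Csub z w) (Csub w v)) by Cx_ring.
  apply Cnorm_triangle.
Qed.

Lemma Cnorm_le_sub (z w : Cx) : Cnorm z <= Cnorm (Csub z w) + Cnorm w.
Proof. pose proof (Cnorm_sub_triangle z w C0). rewrite !Csub_C0 in H. exact H. Qed.

Lemma Cx_eq_of_near (z w : Cx) : (forall e, 0 < e -> Cnorm (Csub z w) <= e) -> z = w.
Proof.
  intro Hnear.
  assert (H0 : Cnorm (Csub z w) = 0).
  { pose proof (Cnorm_ge0 (Csub z w)).
    destruct (Rle_lt_or_eq_dec 0 _ H) as [Hpos|]; [|auto].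
    specialize (Hnear (Cnorm (Csub z w) / 2) ltac:(lra)). lra. }
  apply Cnorm_eq0 in H0. destruct z, w; injection H0; intros; f_equal; lra.
Qed.

Lemma Cnorm_Cscale (c : R) (z : Cx) : Cnorm (Cscale c z) = Rabs c * Cnorm z.
Proof.
  rewrite !Cnorm_Cmod. replace (Cscale c z) with (Complex.Cmult (Complex.RtoC c) z)
    by (unfold Complex.RtoC; Cx_ring).
  rewrite Complex.Cmod_mult. now rewrite (Complex.Cmod_R c).
Qed.

Lemma Cnorm_Cscale_le (c : R) (z : Cx) : Rabs c <= 1 -> Cnorm (Cscale c z) <= Cnorm z.
Proof.
  intro Hc. rewrite Cnorm_Cscale. pose proof (Cnorm_ge0 z). pose proof (Rabs_pos c). nra.
Qed.

Lemma Cscale_1 (z : Cx) : Cscale 1 z = z.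
Proof. Cx_ring. Qed.

Lemma Cscale_0 (z : Cx) : Cscale 0 z = C0.
Proof. Cx_ring. Qed.

Fixpoint deepest (B : nat -> Prop) (m : nat) : nat :=
  match m with
  | O => O
  | S m' => if excluded_middle_informative (B (S m')) then S m' else deepest B m'
  end.

Lemma deepest_spec (B : nat -> Prop) (m k : nat) :
  B k -> (k <= m)%nat -> (k <= deepest B m)%nat /\ B (deepest B m).
Proof.
  intros Hk. induction m as [|m IH]; intro Hkm; simpl.
  - replace k with O in Hk by lia. split; [lia | exact Hk].
  - destruct (excluded_middle_informative (B (S m))) as [HB | HB].
    + split; [lia | exact HB].
    + destruct (Nat.eq_dec k (S m)) as [-> | Hne]; [contradiction|].
      apply IH. lia.
Qed.

Section Ultrafilter.
Context {U : (nat -> Prop) -> Prop} (HU : is_nonprincipal_ultrafilter U).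

Lemma ultra_mono {A B : nat -> Prop} : U A -> (forall n, A n -> B n) -> U B.
Proof. intros HA HAB. destruct HU as (_ & _ & _ & Hmono & _). exact (Hmono A B HAB HA). Qed.

Lemma ultra_and {A B : nat -> Prop} : U A -> U B -> U (fun n => A n /\ B n).
Proof. destruct HU as (_ & _ & Hand & _). apply Hand. Qed.

Lemma ultra_all {A : nat -> Prop} : (forall n, A n) -> U A.
Proof. intro HA. apply (ultra_mono (proj1 HU)). auto. Qed.

Lemma ultra_witness {A : nat -> Prop} : U A -> exists n, A n.
Proof.
  intro HA. apply NNPP. intro Hno. apply (proj1 (proj2 HU)).
  apply (ultra_mono HA). intros n Hn. apply Hno. eauto.
Qed.

Lemma ultra_compl {A : nat -> Prop} : ~ U A -> U (fun n => ~ A n).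
Proof. destruct HU as (_ & _ & _ & _ & Hult & _). destruct (Hult A); tauto. Qed.

Lemma ultra_ge (N : nat) : U (fun n => (N <= n)%nat).
Proof.
  induction N as [|N IH].
  - apply ultra_all. lia.
  - assert (HN : U (fun n => ~ n = N)).
    { apply ultra_compl. destruct HU as (_ & _ & _ & _ & _ & Hfree). apply Hfree. }
    apply (ultra_mono (ultra_and IH HN)). intros n [H1 H2]. lia.
Qed.

Lemma ultra_ge_INR (M : R) : U (fun n => M <= INR n).
Proof.
  destruct (INR_unbounded M) as [N HN].
  apply (ultra_mono (ultra_ge N)). intros n Hn. apply le_INR in Hn. lra.
Qed.

Lemma ultra_forall_In {T : Type} (L : list T) (P : T -> nat -> Prop) :
  (forall c, In c L -> U (P c)) -> U (fun n => forall c, In c L -> P c n).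
Proof.
  induction L as [|a L IH]; intro HL.
  - apply ultra_all. intros n c [].
  - apply (ultra_mono (ultra_and (HL a (or_introl eq_refl))
                                 (IH (fun c Hc => HL c (or_intror Hc))))).
    intros n [Ha HLn] c [<- | Hc]; auto.
Qed.

Lemma ultra_diagonal (A : nat -> nat -> Prop) :
  (forall k, U (A k)) ->
  exists kn : nat -> nat, forall K, U (fun n => (K <= kn n)%nat /\ A (kn n) n).
Proof.
  intro HA. exists (fun n => deepest (fun k => A k n) n). intro K.
  apply (ultra_mono (ultra_and (HA K) (ultra_ge K))). intros n [HK Hn].
  exact (deepest_spec (fun k => A k n) n K HK Hn).
Qed.

Lemma is_ulim_le (a b : nat -> Cx) (A B : Cx) (e : R) :
  is_ulim U a A -> is_ulim U b B -> U (fun n => Cnorm (Csub (a n) (b n)) <= e) ->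
  Cnorm (Csub A B) <= e.
Proof.
  intros HA HB Hab. apply Rnot_lt_le. intro Hlt.
  set (eta := (Cnorm (Csub A B) - e) / 2).
  assert (Heta : 0 < eta) by (unfold eta; lra).
  destruct (ultra_witness (ultra_and (HA _ Heta) (ultra_and (HB _ Heta) Hab)))
    as [n (Han & Hbn & Habn)].
  pose proof (Cnorm_sub_triangle A (a n) B). pose proof (Cnorm_sub_triangle (a n) (b n) B).
  rewrite Cnorm_sub_sym in Han. unfold eta in *. lra.
Qed.

Lemma is_ulim_unique (z : nat -> Cx) (L1 L2 : Cx) :
  is_ulim U z L1 -> is_ulim U z L2 -> L1 = L2.
Proof.
  intros H1 H2. apply Cx_eq_of_near. intros e He.
  apply (is_ulim_le z z _ _ _ H1 H2). apply ultra_all. intro n.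
  rewrite Csub_diag, Cnorm_C0. lra.
Qed.

Lemma ulim_eq (z : nat -> Cx) (L : Cx) : is_ulim U z L -> ulim U z = L.
Proof.
  intro HL. apply (is_ulim_unique z); [|exact HL].
  unfold ulim. apply epsilon_spec. eauto.
Qed.

Lemma is_ulim_eventually (z : nat -> Cx) (L : Cx) : U (fun n => z n = L) -> is_ulim U z L.
Proof.
  intros HL e He. apply (ultra_mono HL). intros n ->. rewrite Csub_diag, Cnorm_C0. lra.
Qed.

Lemma is_ulim_const (L : Cx) : is_ulim U (fun _ => L) L.
Proof. apply is_ulim_eventually, ultra_all. reflexivity. Qed.

Lemma is_ulim_add (a b : nat -> Cx) (A B : Cx) :
  is_ulim U a A -> is_ulim U b B -> is_ulim U (fun n => Cadd (a n) (b n)) (Cadd A B).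
Proof.
  intros HA HB e He.
  apply (ultra_mono (ultra_and (HA (e / 2) ltac:(lra)) (HB (e / 2) ltac:(lra)))).
  intros n [Han Hbn].
  replace (Csub (Cadd (a n) (b n)) (Cadd A B)) with (Cadd (Csub (a n) A) (Csub (b n) B))
    by Cx_ring.
  pose proof (Cnorm_triangle (Csub (a n) A) (Csub (b n) B)). lra.
Qed.

Lemma is_ulim_conj (a : nat -> Cx) (A : Cx) :
  is_ulim U a A -> is_ulim U (fun n => Cconj (a n)) (Cconj A).
Proof.
  intros HA e He. apply (ultra_mono (HA e He)). intros n Han.
  replace (Csub (Cconj (a n)) (Cconj A)) with (Cconj (Csub (a n) A)) by Cx_ring.
  rewrite Cnorm_conj. exact Han.
Qed.

Lemma is_ulim_mul (a b : nat -> Cx) (A B : Cx) (M : R) :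
  (forall n, Cnorm (a n) <= M) -> is_ulim U a A -> is_ulim U b B ->
  is_ulim U (fun n => Cmul (a n) (b n)) (Cmul A B).
Proof.
  intros Ha HA HB e He.
  assert (HM : 0 <= M) by (pose proof (Cnorm_ge0 (a O)); specialize (Ha O); lra).
  pose proof (Cnorm_ge0 B) as HB0.
  set (e1 := e / (2 * (M + 1))). set (e2 := e / (2 * (Cnorm B + 1))).
  assert (He1 : 0 < e1) by (unfold e1; apply Rdiv_lt_0_compat; lra).
  assert (He2 : 0 < e2) by (unfold e2; apply Rdiv_lt_0_compat; lra).
  assert (HMe1 : M * e1 < e / 2)
    by (unfold e1; apply (Rmult_lt_reg_r (2 * (M + 1))); [lra | field_simplify; lra]).
  assert (HBe2 : e2 * Cnorm B < e / 2)
    by (unfold e2; apply (Rmult_lt_reg_r (2 * (Cnorm B + 1))); [lra | field_simplify; lra]).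
  apply (ultra_mono (ultra_and (HA e2 He2) (HB e1 He1))). intros n [Han Hbn].
  replace (Csub (Cmul (a n) (b n)) (Cmul A B))
    with (Cadd (Cmul (a n) (Csub (b n) B)) (Cmul (Csub (a n) A) B)) by Cx_ring.
  eapply Rle_lt_trans; [apply Cnorm_triangle|]. rewrite !Cnorm_mul.
  specialize (Ha n). pose proof (Cnorm_ge0 (a n)).
  pose proof (Cnorm_ge0 (Csub (b n) B)). pose proof (Cnorm_ge0 (Csub (a n) A)).
  assert (Cnorm (a n) * Cnorm (Csub (b n) B) <= M * e1) by (apply Rmult_le_compat; lra).
  assert (Cnorm (Csub (a n) A) * Cnorm B <= e2 * Cnorm B) by (apply Rmult_le_compat; lra).
  lra.
Qed.

Lemma is_ulim_norm_le (z : nat -> Cx) (L : Cx) (M : R) :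
  (forall n, Cnorm (z n) <= M) -> is_ulim U z L -> Cnorm L <= M.
Proof.
  intros Hz HL. apply Rnot_lt_le. intro Hlt.
  destruct (ultra_witness (HL (Cnorm L - M) ltac:(lra))) as [n Hn].
  pose proof (Cnorm_le_sub L (z n)). rewrite Cnorm_sub_sym in Hn. specialize (Hz n). lra.
Qed.

(* The limit is the supremum of the levels [a] exceeded by U-almost every term. *)
Lemma ulimR_exists (z : nat -> R) (M : R) :
  (forall n, Rabs (z n) <= M) -> exists L, forall e, 0 < e -> U (fun n => Rabs (z n - L) < e).
Proof.
  intro Hz.
  assert (Hbnd : forall n, - M <= z n <= M).
  { intro n. pose proof (Rle_abs (z n)). pose proof (Rle_abs (- z n)).
    rewrite Rabs_Ropp in *. specialize (Hz n). lra. }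
  set (E := fun a => U (fun n => a <= z n)).
  assert (HE : E (- M)) by (apply ultra_all; intro n; apply Hbnd).
  assert (HEbound : bound E).
  { exists M. intros a Ha. apply Rnot_lt_le. intro Hlt.
    destruct (ultra_witness Ha) as [n Hn]. specialize (Hbnd n). lra. }
  destruct (completeness E HEbound (ex_intro _ _ HE)) as [L [Hub Hlub]].
  exists L. intros e He.
  assert (Hlow : U (fun n => L - e < z n)).
  { apply NNPP. intro Hno. enough (L <= L - e) by lra. apply Hlub. intros a Ha.
    apply Rnot_lt_le. intro Hlt. apply Hno. apply (ultra_mono Ha). intros; lra. }
  assert (Hup : U (fun n => z n < L + e)).
  { apply NNPP. intro Hno. enough (L + e <= L) by lra. apply Hub.
    apply (ultra_mono (ultra_compl Hno)). intros; lra. }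
  apply (ultra_mono (ultra_and Hlow Hup)). intros n [H1 H2]. apply Rabs_def1; lra.
Qed.

Lemma is_ulim_exists (z : nat -> Cx) (M : R) :
  (forall n, Cnorm (z n) <= M) -> exists L, is_ulim U z L.
Proof.
  intro Hz.
  destruct (ulimR_exists (fun n => fst (z n)) M) as [L1 H1].
  { intro n. eapply Rle_trans; [apply Cnorm_fst | apply Hz]. }
  destruct (ulimR_exists (fun n => snd (z n)) M) as [L2 H2].
  { intro n. eapply Rle_trans; [apply Cnorm_snd | apply Hz]. }
  exists (L1, L2). intros e He.
  apply (ultra_mono (ultra_and (H1 (e / 2) ltac:(lra)) (H2 (e / 2) ltac:(lra)))).
  intros n [Hfst Hsnd]. eapply Rle_lt_trans; [apply Cnorm_le_Rabs_fst_snd|].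
  simpl. unfold Rminus in *. lra.
Qed.

End Ultrafilter.

Lemma strict_mono_ge (phi : nat -> nat) :
  (forall n, (phi n < phi (S n))%nat) -> forall n, (n <= phi n)%nat.
Proof. intros Hphi n. induction n as [|n IH]; [lia|]. specialize (Hphi n). lia. Qed.

Lemma inv_INR_succ_eventually_lt (delta : R) :
  0 < delta -> exists K : nat, forall m, (K <= m)%nat -> / (INR m + 1) < delta.
Proof.
  intro Hd. destruct (INR_unbounded (/ delta)) as [K HK]. exists K. intros m Hm.
  apply le_INR in Hm. pose proof (pos_INR m).
  rewrite <- (Rinv_inv delta). apply Rinv_lt_contravar; [|lra].
  apply Rmult_lt_0_compat; [apply Rinv_0_lt_compat|]; lra.
Qed.

Section Metric.
Context {X : Type} {d : X -> X -> R} (Hm : is_metric d).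

Lemma metric_refl (x : X) : d x x = 0.
Proof. apply (proj1 Hm). reflexivity. Qed.

Lemma metric_sym (x y : X) : d x y = d y x.
Proof. apply (proj1 (proj2 Hm)). Qed.

Lemma metric_triangle (x y z : X) : d x z <= d x y + d y z.
Proof. apply (proj2 (proj2 Hm)). Qed.

Lemma metric_nonneg (x y : X) : 0 <= d x y.
Proof.
  pose proof (metric_triangle x y x). rewrite metric_refl, (metric_sym y x) in H. lra.
Qed.

Lemma metric_lipschitz_from (o x y : X) : Rabs (d o x - d o y) <= d x y.
Proof.
  pose proof (metric_triangle o x y). pose proof (metric_triangle o y x).
  rewrite (metric_sym y x) in *. apply Rabs_le. lra.
Qed.

Lemma compact_bounded (K : X -> Prop) (h : X -> Cx) :
  compact_set d K -> continuous_fun d h -> exists M, forall x, K x -> Cnorm (h x) <= M.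
Proof.
  intros HK Hh. apply NNPP. intro Hunb.
  assert (Hbig : forall m : nat, exists x, K x /\ INR m < Cnorm (h x)).
  { intro m. apply NNPP. intro Hno. apply Hunb. exists (INR m). intros x Hx.
    apply Rnot_lt_le. intro. apply Hno. eauto. }
  apply choice in Hbig as [p Hp].
  destruct (HK p) as [phi [Hphi [l [_ Hconv]]]]; [apply Hp|].
  destruct (Hh l 1 ltac:(lra)) as [delta [Hdelta Hnear]].
  destruct (Hconv delta Hdelta) as [N HN].
  destruct (INR_unbounded (Cnorm (h l) + 1)) as [N' HN'].
  set (m := Nat.max N N').
  specialize (HN m ltac:(unfold m; lia)). rewrite metric_sym in HN.
  assert (Hm' : (N' <= phi m)%nat)
    by (pose proof (strict_mono_ge phi Hphi m); unfold m in *; lia).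
  apply le_INR in Hm'. destruct (Hp (phi m)) as [_ Hpm].
  pose proof (Hnear _ HN). pose proof (Cnorm_le_sub (h (p (phi m))) (h l)). lra.
Qed.

Lemma compact_uniformly_continuous (K : X -> Prop) (h : X -> Cx) :
  compact_set d K -> continuous_fun d h ->
  forall eps, 0 < eps -> exists delta, 0 < delta /\
    forall s t, K s -> K t -> d s t < delta -> Cnorm (Csub (h s) (h t)) <= eps.
Proof.
  intros HK Hh eps Heps. apply NNPP. intro Hno.
  assert (Hbad : forall m : nat, exists p : X * X, K (fst p) /\ K (snd p) /\
            d (fst p) (snd p) < / (INR m + 1) /\ eps < Cnorm (Csub (h (fst p)) (h (snd p)))).
  { intro m. apply NNPP. intro Hno'. apply Hno. exists (/ (INR m + 1)). split.
    { apply Rinv_0_lt_compat. pose proof (pos_INR m). lra. }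
    intros s t Hs Ht Hst. apply Rnot_lt_le. intro Hlt. apply Hno'. exists (s, t). auto. }
  apply choice in Hbad as [p Hp].
  destruct (HK (fun m => fst (p m))) as [phi [Hphi [l [_ Hconv]]]]; [apply Hp|].
  destruct (Hh l (eps / 2) ltac:(lra)) as [delta [Hdelta Hnear]].
  destruct (Hconv (delta / 2) ltac:(lra)) as [N HN].
  destruct (inv_INR_succ_eventually_lt (delta / 2) ltac:(lra)) as [N' HN'].
  set (m := Nat.max N N'). set (s := fst (p (phi m))). set (t := snd (p (phi m))).
  specialize (HN m ltac:(unfold m; lia)). rewrite metric_sym in HN.
  assert (Hm' : (N' <= phi m)%nat)
    by (pose proof (strict_mono_ge phi Hphi m); unfold m in *; lia).
  specialize (HN' _ Hm'). destruct (Hp (phi m)) as (_ & _ & Hst & Hhst).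
  fold s in HN. fold s t in Hst, Hhst.
  assert (Hlt : d l t < delta) by (pose proof (metric_triangle l s t); lra).
  assert (Hls : d l s < delta) by lra.
  apply Hnear in Hls. apply Hnear in Hlt.
  pose proof (Cnorm_sub_triangle (h s) (h l) (h t)). rewrite (Cnorm_sub_sym (h l)) in H. lra.
Qed.

Lemma compact_totally_bounded (K : X -> Prop) (x0 : X) :
  compact_set d K -> forall delta, 0 < delta ->
  exists L : list X, (forall c, In c L -> K c) /\
    forall x, K x -> exists c, In c L /\ d x c < delta.
Proof.
  intros HK delta Hdelta. apply NNPP. intro Hno.
  assert (Hfar : forall L : list X, (forall c, In c L -> K c) ->
            exists x, K x /\ forall c, In c L -> delta <= d x c).
  { intros L HL. apply NNPP. intro Hno'. apply Hno. exists L. split; [exact HL|].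
    intros x Hx. apply NNPP. intro Hno''. apply Hno'. exists x. split; [exact Hx|].
    intros c Hc. apply Rnot_lt_le. intro. apply Hno''. eauto. }
  set (far := fun L : list X => epsilon (inhabits x0)
      (fun x => K x /\ forall c, In c L -> delta <= d x c)).
  assert (Hfar' : forall L, (forall c, In c L -> K c) ->
            K (far L) /\ forall c, In c L -> delta <= d (far L) c)
    by (intros L HL; apply epsilon_spec, Hfar, HL).
  set (net := fix net (n : nat) : list X :=
      match n with O => nil | S n => far (net n) :: net n end).
  assert (Hnet : forall n c, In c (net n) -> K c).
  { induction n as [|n IH]; simpl; intros c Hc; [destruct Hc|].
    destruct Hc as [<- | Hc]; [apply Hfar', IH | auto]. }
  set (x := fun n => far (net n)).
  assert (Hin : forall m n, (m < n)%nat -> In (x m) (net n)).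
  { intros m n Hmn. induction n as [|n IH]; [lia|]. simpl.
    destruct (Nat.eq_dec m n) as [-> | Hne]; [left; auto | right; apply IH; lia]. }
  assert (Hsep : forall m n, (m < n)%nat -> delta <= d (x n) (x m))
    by (intros m n Hmn; apply (proj2 (Hfar' _ (Hnet n))), Hin, Hmn).
  destruct (HK x) as [phi [Hphi [l [_ Hconv]]]]; [intro n; apply Hfar', Hnet|].
  destruct (Hconv (delta / 2) ltac:(lra)) as [N HN].
  pose proof (HN N (le_n _)). pose proof (HN (S N) (le_S _ _ (le_n _))).
  pose proof (Hsep _ _ (Hphi N)).
  pose proof (metric_triangle (x (phi (S N))) l (x (phi N))). rewrite (metric_sym l) in H2.
  lra.
Qed.

End Metric.

Definition clamp01 (v : R) : R := Rmax 0 (Rmin 1 v).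

Lemma clamp01_lipschitz (a b : R) : Rabs (clamp01 a - clamp01 b) <= Rabs (a - b).
Proof.
  unfold clamp01, Rmax, Rmin.
  repeat destruct Rle_dec; unfold Rabs; repeat destruct Rcase_abs; lra.
Qed.

Lemma clamp01_range (v : R) : 0 <= clamp01 v <= 1.
Proof. unfold clamp01, Rmax, Rmin. repeat destruct Rle_dec; lra. Qed.

Lemma clamp01_abs_le1 (v : R) : Rabs (clamp01 v) <= 1.
Proof. pose proof (clamp01_range v). apply Rabs_le. lra. Qed.

Lemma clamp01_nonpos (v : R) : v <= 0 -> clamp01 v = 0.
Proof. unfold clamp01, Rmax, Rmin. repeat destruct Rle_dec; lra. Qed.

Lemma clamp01_ge1 (v : R) : 1 <= v -> clamp01 v = 1.
Proof. unfold clamp01, Rmax, Rmin. repeat destruct Rle_dec; lra. Qed.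

Section Cutoff.
Context {X : Type} {d : X -> X -> R} (Hm : is_metric d).

Definition lipschitz1 (c : X -> R) : Prop := forall x y, Rabs (c x - c y) <= d x y.

Lemma lipschitz1_clamp01_in (o : X) (a : R) : lipschitz1 (fun x => clamp01 (a - d o x)).
Proof.
  intros x y. eapply Rle_trans; [apply clamp01_lipschitz|].
  replace (a - d o x - (a - d o y)) with (- (d o x - d o y)) by ring.
  rewrite Rabs_Ropp. apply (metric_lipschitz_from Hm).
Qed.

Lemma lipschitz1_clamp01_out (o : X) (a : R) : lipschitz1 (fun x => clamp01 (d o x - a)).
Proof.
  intros x y. eapply Rle_trans; [apply clamp01_lipschitz|].
  replace (d o x - a - (d o y - a)) with (d o x - d o y) by ring.
  apply (metric_lipschitz_from Hm).
Qed.

Lemma continuous_cutoff (c : X -> R) (g : X -> Cx) :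
  lipschitz1 c -> (forall x, Rabs (c x) <= 1) -> continuous_fun d g ->
  continuous_fun d (fun x => Cscale (c x) (g x)).
Proof.
  intros Hc Hc1 Hg x eps Heps.
  destruct (Hg x (eps / 2) ltac:(lra)) as [delta1 [Hdelta1 Hnear]].
  pose proof (Cnorm_ge0 (g x)).
  set (delta2 := eps / (2 * (Cnorm (g x) + 1))).
  assert (Hdelta2 : 0 < delta2) by (unfold delta2; apply Rdiv_lt_0_compat; lra).
  assert (Hdelta2g : delta2 * Cnorm (g x) < eps / 2).
  { unfold delta2. apply (Rmult_lt_reg_r (2 * (Cnorm (g x) + 1))); [lra|].
    field_simplify; nra. }
  exists (Rmin delta1 delta2). split; [apply Rmin_pos; lra|].
  intros y Hy. pose proof (Rmin_l delta1 delta2). pose proof (Rmin_r delta1 delta2).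
  replace (Csub (Cscale (c y) (g y)) (Cscale (c x) (g x)))
    with (Cadd (Cscale (c y) (Csub (g y) (g x))) (Cscale (c y - c x) (g x))) by Cx_ring.
  eapply Rle_lt_trans; [apply Cnorm_triangle|].
  pose proof (Cnorm_Cscale_le (c y) (Csub (g y) (g x)) (Hc1 y)).
  specialize (Hnear y ltac:(lra)).
  assert (Hcyx : Rabs (c y - c x) <= delta2)
    by (rewrite (metric_sym Hm) in Hy; pose proof (Hc y x); lra).
  rewrite (Cnorm_Cscale (c y - c x)).
  assert (Rabs (c y - c x) * Cnorm (g x) <= delta2 * Cnorm (g x))
    by (apply Rmult_le_compat_r; lra).
  lra.
Qed.

Lemma in_C0_cutoff (c : X -> R) (g : X -> Cx) :
  lipschitz1 c -> (forall x, Rabs (c x) <= 1) -> in_C0 d g ->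
  in_C0 d (fun x => Cscale (c x) (g x)).
Proof.
  intros Hc Hc1 [Hg Hvanish]. split; [apply continuous_cutoff; assumption|].
  intros eps Heps. destruct (Hvanish eps Heps) as [K [HK HKout]].
  exists K. split; [exact HK|]. intros x Hx.
  eapply Rle_lt_trans; [apply Cnorm_Cscale_le, Hc1 | apply HKout, Hx].
Qed.

End Cutoff.

Definition truncate {X : Type} (d : X -> X -> R) (o : X) (h : X -> Cx) : nat -> X -> Cx :=
  fun n x => Cscale (clamp01 (INR n + 1 - d o x)) (h x).

Section UltraLimitMap.
Context {X : Type} {d : X -> X -> R} {o : X} {U : (nat -> Prop) -> Prop}.
Hypothesis HU : is_nonprincipal_ultrafilter U.
Hypothesis Hm : is_metric d.
Hypothesis Hballs : forall r, compact_set d (ball d o r).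

Lemma linfA_is_ulim (g : nat -> X -> Cx) :
  in_linfA d g -> forall t, is_ulim U (fun n => g n t) (fU U g t).
Proof.
  intros [_ [M HM]] t. destruct (is_ulim_exists HU (fun n => g n t) M) as [L HL];
    [intro n; apply HM|].
  unfold fU. rewrite (ulim_eq HU _ L HL). exact HL.
Qed.

Lemma fU_ueq (g1 g2 : nat -> X -> Cx) :
  in_linfA d g1 -> in_linfA d g2 -> ueq U g1 g2 -> fU U g1 = fU U g2.
Proof.
  intros H1 H2 H12. apply functional_extensionality. intro t. apply Cx_eq_of_near.
  intros e He. apply (is_ulim_le HU _ _ _ _ _ (linfA_is_ulim g1 H1 t) (linfA_is_ulim g2 H2 t)).
  apply (ultra_mono HU (H12 e He)). auto.
Qed.

Lemma fU_sadd (g1 g2 : nat -> X -> Cx) : in_linfA d g1 -> in_linfA d g2 ->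
  fU U (sadd g1 g2) = (fun t => Cadd (fU U g1 t) (fU U g2 t)).
Proof.
  intros H1 H2. apply functional_extensionality. intro t. apply (ulim_eq HU).
  apply (is_ulim_add HU); apply linfA_is_ulim; assumption.
Qed.

Lemma fU_smul (g1 g2 : nat -> X -> Cx) : in_linfA d g1 -> in_linfA d g2 ->
  fU U (smul g1 g2) = (fun t => Cmul (fU U g1 t) (fU U g2 t)).
Proof.
  intros H1 H2. apply functional_extensionality. intro t. apply (ulim_eq HU).
  pose proof H1 as [_ [M HM]].
  apply (is_ulim_mul HU _ _ _ _ M); [intro n; apply HM | |]; apply linfA_is_ulim; assumption.
Qed.

Lemma fU_sscal (l : Cx) (g : nat -> X -> Cx) : in_linfA d g ->
  fU U (sscal l g) = (fun t => Cmul l (fU U g t)).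
Proof.
  intro Hg. apply functional_extensionality. intro t. apply (ulim_eq HU).
  apply (is_ulim_mul HU _ _ _ _ (Cnorm l));
    [intro; apply Rle_refl | apply (is_ulim_const HU) | apply linfA_is_ulim, Hg].
Qed.

Lemma fU_sstar (g : nat -> X -> Cx) : in_linfA d g ->
  fU U (sstar g) = (fun t => Cconj (fU U g t)).
Proof.
  intro Hg. apply functional_extensionality. intro t. apply (ulim_eq HU).
  apply (is_ulim_conj HU), linfA_is_ulim, Hg.
Qed.

Lemma rep_AcU_equicontinuous_at (g : nat -> X -> Cx) : rep_AcU d o U g ->
  forall t eps, 0 < eps -> exists delta, 0 < delta /\ forall y, d t y < delta ->
    U (fun n => Cnorm (Csub (g n y) (g n t)) <= eps).
Proof.
  intros [_ [f [_ [Hequi Hfg]]]] t eps Heps.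
  pose proof (metric_nonneg Hm o t).
  destruct (Hequi (d o t + 1) (eps / 3) ltac:(lra) ltac:(lra)) as [delta [Hdelta Hf]].
  exists (Rmin delta 1). split; [apply Rmin_pos; lra|].
  intros y Hy. pose proof (Rmin_l delta 1). pose proof (Rmin_r delta 1).
  assert (Hyball : ball d o (d o t + 1) y)
    by (unfold ball; pose proof (metric_triangle Hm o t y); lra).
  assert (Htball : ball d o (d o t + 1) t) by (unfold ball; lra).
  rewrite (metric_sym Hm) in Hy.
  apply (ultra_mono HU (ultra_and HU Hf (Hfg (eps / 3) ltac:(lra)))). intros n [Hfn Hfgn].
  specialize (Hfn y t Hyball Htball ltac:(lra)).
  pose proof (Hfgn y) as Hy'. pose proof (Hfgn t) as Ht'.
  pose proof (Cnorm_sub_triangle (g n y) (f n y) (g n t)).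
  pose proof (Cnorm_sub_triangle (f n y) (f n t) (g n t)).
  rewrite Cnorm_sub_sym in Hy'. lra.
Qed.

Lemma fU_in_Cb (g : nat -> X -> Cx) : rep_AcU d o U g -> in_Cb d (fU U g).
Proof.
  intro Hg. pose proof (linfA_is_ulim g (proj1 Hg)) as Hlim. split.
  - intros t eps Heps.
    destruct (rep_AcU_equicontinuous_at g Hg t (eps / 2) ltac:(lra)) as [delta [Hdelta Hnear]].
    exists delta. split; [exact Hdelta|]. intros y Hy.
    pose proof (is_ulim_le HU _ _ _ _ _ (Hlim y) (Hlim t) (Hnear y Hy)). lra.
  - destruct Hg as [[_ [M HM]] _]. exists M. intro x.
    apply (is_ulim_norm_le HU (fun n => g n x)); [intro n; apply HM | apply Hlim].
Qed.

Lemma truncate_eq (h : X -> Cx) (n : nat) (x : X) :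
  d o x <= INR n -> truncate d o h n x = h x.
Proof. intro Hx. unfold truncate. rewrite clamp01_ge1 by lra. apply Cscale_1. Qed.

Lemma truncate_in_linfA (h : X -> Cx) : in_Cb d h -> in_linfA d (truncate d o h).
Proof.
  intros [Hh [M HM]]. split.
  - intro n. split.
    + apply (continuous_cutoff Hm (fun x => clamp01 (INR n + 1 - d o x)) h);
        [apply (lipschitz1_clamp01_in Hm) | intro; apply clamp01_abs_le1 | exact Hh].
    + intros eps Heps. exists (ball d o (INR n + 1)). split; [apply Hballs|].
      intros x Hx. unfold truncate. rewrite clamp01_nonpos, Cscale_0, Cnorm_C0; [exact Heps|].
      unfold ball in Hx. lra.
  - exists M. intros n x.
    eapply Rle_trans; [apply Cnorm_Cscale_le, clamp01_abs_le1 | apply HM].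
Qed.

Lemma truncate_rep_AcU (h : X -> Cx) : in_Cb d h -> rep_AcU d o U (truncate d o h).
Proof.
  intro Hh. pose proof (truncate_in_linfA h Hh) as Htr. split; [exact Htr|].
  exists (truncate d o h). split; [exact Htr|]. split.
  - intros r eps Hr Heps.
    destruct (compact_uniformly_continuous Hm _ h (Hballs r) (proj1 Hh) eps Heps)
      as [delta [Hdelta Hunif]].
    exists delta. split; [exact Hdelta|]. apply (ultra_mono HU (ultra_ge_INR HU r)).
    intros n Hn s t Hs Ht Hst. unfold ball in Hs, Ht.
    rewrite !truncate_eq by lra. apply Hunif; assumption.
  - intros e He. apply (ultra_all HU). intros n x. rewrite Csub_diag, Cnorm_C0. lra.
Qed.

Lemma fU_truncate (h : X -> Cx) : fU U (truncate d o h) = h.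
Proof.
  apply functional_extensionality. intro t. apply (ulim_eq HU), (is_ulim_eventually HU).
  apply (ultra_mono HU (ultra_ge_INR HU (d o t))). intros n Hn. apply truncate_eq, Hn.
Qed.

Lemma const_rep_AcU (a : X -> Cx) : in_C0 d a -> rep_AcU d o U (fun _ => a).
Proof.
  intros Ha. pose proof Ha as [Hc Hvanish].
  assert (Hlin : in_linfA d (fun _ => a)).
  { split; [intro; exact Ha|].
    destruct (Hvanish 1 ltac:(lra)) as [K [HK HKout]].
    destruct (compact_bounded Hm K a HK Hc) as [M HM].
    exists (Rmax M 1). intros n x. destruct (classic (K x)) as [Hx | Hx].
    - pose proof (HM x Hx). pose proof (Rmax_l M 1). lra.
    - pose proof (HKout x Hx). pose proof (Rmax_r M 1). lra. }
  split; [exact Hlin|]. exists (fun _ => a). split; [exact Hlin|]. split.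
  - intros r eps Hr Heps.
    destruct (compact_uniformly_continuous Hm _ a (Hballs r) Hc eps Heps)
      as [delta [Hdelta Hunif]].
    exists delta. split; [exact Hdelta | apply (ultra_all HU); auto].
  - intros e He. apply (ultra_all HU). intros n x. rewrite Csub_diag, Cnorm_C0. lra.
Qed.

Lemma fU_const (a : X -> Cx) : fU U (fun _ => a) = a.
Proof.
  apply functional_extensionality. intro t. apply (ulim_eq HU), (is_ulim_const HU).
Qed.

Lemma rep_I_fU_zero (g : nat -> X -> Cx) : rep_I d o U g -> fU U g = (fun _ => C0).
Proof.
  intros [Hg [f [Hf [Hfg [r [Hr Hzero]]]]]].
  assert (Hgf : ueq U g f).
  { intros e He. apply (ultra_mono HU (Hfg e He)). intros n Hn x.
    rewrite Cnorm_sub_sym. apply Hn. }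
  rewrite (fU_ueq g f Hg Hf Hgf). apply functional_extensionality. intro t.
  apply (ulim_eq HU), (is_ulim_eventually HU).
  apply (ultra_mono HU (Hr (d o t))). intros n Hn. apply Hzero, Hn.
Qed.

Lemma fU_zero_small_on_balls (g : nat -> X -> Cx) :
  rep_AcU d o U g -> fU U g = (fun _ => C0) ->
  forall r eps, 0 < r -> 0 < eps ->
    U (fun n => forall x, ball d o r x -> Cnorm (g n x) <= eps).
Proof.
  intros Hg Hzero r eps Hr Heps.
  pose proof (linfA_is_ulim g (proj1 Hg)) as Hlim. rewrite Hzero in Hlim.
  destruct Hg as [_ [f [_ [Hequi Hfg]]]].
  destruct (Hequi r (eps / 4) Hr ltac:(lra)) as [delta [Hdelta Hf]].
  destruct (compact_totally_bounded Hm _ o (Hballs r) delta Hdelta) as [L [HLball HLnet]].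
  assert (HLsmall : U (fun n => forall c, In c L -> Cnorm (g n c) <= eps / 4)).
  { apply (ultra_forall_In HU L (fun c n => Cnorm (g n c) <= eps / 4)). intros c _.
    apply (ultra_mono HU (Hlim c (eps / 4) ltac:(lra))). intros n Hn.
    rewrite Csub_C0 in Hn. lra. }
  apply (ultra_mono HU (ultra_and HU Hf (ultra_and HU (Hfg (eps / 4) ltac:(lra)) HLsmall))).
  intros n (Hfn & Hfgn & HLn) x Hx. destruct (HLnet x Hx) as [c [Hc Hxc]].
  specialize (Hfn x c Hx (HLball c Hc) Hxc). pose proof (Hfgn x). pose proof (Hfgn c).
  specialize (HLn c Hc).
  pose proof (Cnorm_le_sub (g n x) (g n c)).
  pose proof (Cnorm_sub_triangle (g n x) (f n x) (g n c)).
  pose proof (Cnorm_sub_triangle (f n x) (f n c) (g n c)).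
  rewrite (Cnorm_sub_sym (g n x) (f n x)) in *. lra.
Qed.

Lemma fU_zero_rep_I (g : nat -> X -> Cx) :
  rep_AcU d o U g -> fU U g = (fun _ => C0) -> rep_I d o U g.
Proof.
  intros Hg Hzero.
  set (small := fun (k n : nat) =>
    forall x, ball d o (INR k + 1) x -> Cnorm (g n x) <= / (INR k + 1)).
  assert (Hsmall : forall k, U (small k)).
  { intro k. pose proof (pos_INR k).
    apply (fU_zero_small_on_balls g Hg Hzero); [|apply Rinv_0_lt_compat]; lra. }
  destruct (ultra_diagonal HU small Hsmall) as [kn Hkn].
  destruct Hg as [[HgC0 [M HM]] _].
  set (f := fun n x => Cscale (clamp01 (d o x - INR (kn n))) (g n x)).
  assert (Hf : in_linfA d f).
  { split.
    - intro n. apply (in_C0_cutoff Hm);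
        [apply (lipschitz1_clamp01_out Hm) | intro; apply clamp01_abs_le1 | apply HgC0].
    - exists M. intros n x.
      eapply Rle_trans; [apply Cnorm_Cscale_le, clamp01_abs_le1 | apply HM]. }
  split; [split; [exact HgC0 | exists M; exact HM]|]. exists f. split; [exact Hf|]. split.
  - intros eps Heps. destruct (inv_INR_succ_eventually_lt eps Heps) as [K HK].
    apply (ultra_mono HU (Hkn K)). intros n [HKn Hsmalln] x.
    replace (Csub (f n x) (g n x)) with (Cscale (clamp01 (d o x - INR (kn n)) - 1) (g n x))
      by (unfold f; Cx_ring).
    destruct (Rle_dec (d o x) (INR (kn n) + 1)) as [Hx | Hx].
    + specialize (Hsmalln x Hx). specialize (HK _ HKn).
      assert (Habs : Rabs (clamp01 (d o x - INR (kn n)) - 1) <= 1).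
      { pose proof (clamp01_range (d o x - INR (kn n))). apply Rabs_le. lra. }
      pose proof (Cnorm_Cscale_le _ (g n x) Habs). lra.
    + rewrite clamp01_ge1 by lra. rewrite Rminus_diag, Cscale_0, Cnorm_C0. lra.
  - exists (fun n => INR (kn n)). split.
    + intro r. destruct (INR_unbounded r) as [K HK].
      apply (ultra_mono HU (Hkn K)). intros n [HKn _]. apply le_INR in HKn. lra.
    + intros n x Hx. unfold f, ball in *. rewrite clamp01_nonpos by lra. apply Cscale_0.
Qed.

End UltraLimitMap.

Theorem mainTheorem5 (X : Type) (d : X -> X -> R) (o : X)
  (U : (nat -> Prop) -> Prop) :
  is_proper_metric d ->
  is_nonprincipal_ultrafilter U ->
  (* the pointwise U-limits exist and f_U lies in C_b(X) *)
  (forall g, rep_AcU d o U g ->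
     (forall t, is_ulim U (fun n => g n t) (fU U g t)) /\ in_Cb d (fU U g)) /\
  (* well defined on classes *)
  (forall g1 g2, rep_AcU d o U g1 -> rep_AcU d o U g2 -> ueq U g1 g2 ->
     fU U g1 = fU U g2) /\
  (* *-homomorphism *)
  (forall g1 g2, rep_AcU d o U g1 -> rep_AcU d o U g2 ->
     fU U (sadd g1 g2) = (fun t => Cadd (fU U g1 t) (fU U g2 t)) /\
     fU U (smul g1 g2) = (fun t => Cmul (fU U g1 t) (fU U g2 t))) /\
  (forall (l : Cx) g, rep_AcU d o U g ->
     fU U (sscal l g) = (fun t => Cmul l (fU U g t))) /\
  (forall g, rep_AcU d o U g -> fU U (sstar g) = (fun t => Cconj (fU U g t))) /\
  (* surjective onto C_b(X) *)
  (forall h, in_Cb d h -> exists g, rep_AcU d o U g /\ fU U g = h) /\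
  (* kernel is exactly I *)
  (forall g, rep_AcU d o U g -> (fU U g = (fun _ => C0) <-> rep_I d o U g)) /\
  (* Phi(q(Delta a)) = a *)
  (forall a, in_C0 d a -> rep_AcU d o U (fun _ => a) /\ fU U (fun _ => a) = a).
Proof.
  intros [Hm Hcompact] HU. pose proof (Hcompact o) as Hballs.
  split; [intros g Hg; exact (conj (linfA_is_ulim HU g (proj1 Hg)) (fU_in_Cb HU Hm g Hg))|].
  split; [intros g1 g2 H1 H2; exact (fU_ueq HU g1 g2 (proj1 H1) (proj1 H2))|].
  split; [intros g1 g2 H1 H2;
          exact (conj (fU_sadd HU g1 g2 (proj1 H1) (proj1 H2))
                      (fU_smul HU g1 g2 (proj1 H1) (proj1 H2)))|].
  split; [intros l g Hg; exact (fU_sscal HU l g (proj1 Hg))|].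
  split; [intros g Hg; exact (fU_sstar HU g (proj1 Hg))|].
  split; [intros h Hh; exists (truncate d o h);
          exact (conj (truncate_rep_AcU HU Hm Hballs h Hh) (fU_truncate HU h))|].
  split; [intros g Hg; exact (conj (fU_zero_rep_I HU Hm Hballs g Hg) (rep_I_fU_zero HU g))|].
  intros a Ha. exact (conj (const_rep_AcU HU Hm Hballs a Ha) (fU_const HU a)).
Qed.
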